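(* Let $(\Omega,\mathcal{A},\sigma)$ be a probability space and let $f,g\in L^2(\sigma)$ satisfy $\sigma(\{|fg|=0\})=0$. Then (A) $\mathcal{E}(f\wedge g)\le\mathcal{E}(f)+\mathcal{E}(g)$; (B) $\mathcal{E}(f\vee g)\le\mathcal{E}(f)+\mathcal{E}(g)$; (C) $\mathcal{E}(f\wedge f^2)\le4\,\mathcal{E}(f)$.
   Context: $\mathcal{E}(h)=\int_\Omega|h|^2\,d\sigma-\exp\left(\int_\Omega\log|h|^2\,d\sigma\right)$. For measurable $f,g$, $f\wedge g$ (resp. $f\vee g$) denotes a measurable function with $|f\wedge g|=\min(|f|,|g|)$ (resp. $|f\vee g|=\max(|f|,|g|)$) pointwise (e.g. equal to $g$ where $|g|\le|f|$ and to $f$ elsewhere); $\mathcal{E}$ depends only on the modulus. *)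

From HB Require Import structures.
From mathcomp Require Import all_boot all_order all_algebra.
From mathcomp Require Import all_classical all_reals all_analysis.
Set Implicit Arguments. Unset Strict Implicit. Unset Printing Implicit Defensive.
Import Order.TTheory GRing.Theory Num.Theory.
Local Open Scope classical_set_scope.
Local Open Scope ring_scope.
Local Open Scope ereal_scope.

Definition elog {R : realType} (x : R) : \bar R :=
  if (0 < x)%R then (ln x)%:E else -oo.

Definition Efun {d : measure_display} {T : measurableType d} {R : realType}
  (sigma : probability T R) (h : T -> R) : \bar R :=
  \int[sigma]_x ((`|h x| ^+ 2)%R)%:E
  - expeR (\int[sigma]_x elog (`|h x| ^+ 2)%R).

Definition inL2 {d : measure_display} {T : measurableType d} {R : realType}
  (sigma : probability T R) (h : T -> R) : Prop :=
  measurable_fun setT h /\ \int[sigma]_x ((`|h x| ^+ 2)%R)%:E < +oo.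

From HB Require Import structures.
From mathcomp Require Import all_boot all_order all_algebra.
From mathcomp Require Import all_classical all_reals all_analysis.
From mathcomp Require Import ring lra.
Set Implicit Arguments.
Unset Strict Implicit.
Unset Printing Implicit Defensive.
Import Order.TTheory GRing.Theory Num.Theory measurable_realfun.
Local Open Scope classical_set_scope.
Local Open Scope ring_scope.

(* The functional E(a) = int a - exp (int log a) of a density a = |h|^2 has a variational
   form: E(a) = min_k int P_k(a), where P_k(y) = y - e^k - e^k (log y - k) is the gap at
   log y between exp and its tangent at k (and P_{-oo}(y) = y), the minimum being attained at
   k = int log a.  It therefore suffices to compare the integrands pointwise, for suitable
   base points: P_{min k1 k2}(min y1 y2) <= P_{k1}(y1) + P_{k2}(y2), and likewise for max,
   follow from an exchange inequality for the tangent gap, and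
   P_{min k (2k)}(min y y^2) <= 4 P_k(y) is an elementary inequality on ln. *)

Section tangent_gap.
Variable R : realType.
Implicit Types c k l u v y z : R.

Lemma ln_le_subr1 z : 0 < z -> ln z <= z - 1.
Proof. by move=> z0; have := @le_ln1Dx R (z - 1); rewrite addrCA subrr addr0; apply; lra. Qed.

Lemma expR_ge_tangent c l : expR c * (1 + (l - c)) <= expR l.
Proof.
have -> : expR l = expR (l - c) * expR c by rewrite -expRD subrK.
by rewrite mulrC ler_pM2r ?expR_gt0 ?expR_ge1Dx.
Qed.

Lemma ger0_is_derive_le (f df : R -> R) (a b : R) : a <= b ->
  (forall x, a <= x <= b -> is_derive x 1 f (df x)) ->
  (forall x, a < x < b -> 0 <= df x) -> f a <= f b.
Proof.
move=> ab f_df df_ge0.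
have f_derivable x : a <= x <= b -> derivable f x 1.
  by move=> x_ab; have f_x := f_df x x_ab; exact: ex_derive.
apply: (@ger0_derive1_ndecr _ f a b) => //.
- by move=> x; rewrite in_itv /= => /andP[ax xb]; apply: f_derivable; rewrite !ltW.
- move=> x; rewrite in_itv /= => x_ab; have /andP[ax xb] := x_ab.
  have f_x : is_derive x 1 f (df x) by apply: f_df; rewrite !ltW.
  by rewrite derive1E derive_val df_ge0.
- by apply: derivable_within_continuous => x; rewrite in_itv /=; apply: f_derivable.
Qed.

Lemma two_mul_ln_le_sqr_subr1 z : 1 <= z -> 2 * z * ln z <= z ^+ 2 - 1.
Proof.
move=> z1.
suff : 1 ^+ 2 - 1 - 2 * 1 * ln 1 <= z ^+ 2 - 1 - 2 * z * ln z :> R.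
  by rewrite ln1; lra.
apply: (@ger0_is_derive_le (fun x => x ^+ 2 - 1 - 2 * x * ln x)
  (fun x => 2 * x - 2 * ln x - 2)) => // x.
- case/andP=> x1 _; have x0 : 0 < x by lra.
  have ln_x := is_derive1_ln x0; apply: is_derive_eq.
  by rewrite /GRing.scale /=; field; apply: lt0r_neq0.
- by case/andP=> x1 _; have := @ln_le_subr1 x; lra.
Qed.

Lemma addr1_mul_ln_le z : 0 < z -> z <= 1 -> (z + 1) * ln z <= 2 * (z - 1).
Proof.
move=> z0 z1.
suff : (z + 1) * ln z - 2 * (z - 1) <= (1 + 1) * ln 1 - 2 * (1 - 1) :> R.
  by rewrite ln1; lra.
apply: (@ger0_is_derive_le (fun x => (x + 1) * ln x - 2 * (x - 1))
  (fun x => ln x + x^-1 - 1)) => // x.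
- case/andP=> x1 _; have x0 : 0 < x by lra.
  have ln_x := is_derive1_ln x0; apply: is_derive_eq.
  by rewrite /GRing.scale /=; field; apply: lt0r_neq0.
- case/andP=> zx _; have x0 : 0 < x by lra.
  have := @ln_le_subr1 x^-1; rewrite lnV ?posrE // invr_gt0; lra.
Qed.

Definition tangent_gap k y := y - expR k - expR k * (ln y - k).

Lemma tangent_gap_ge0 k y : 0 < y -> 0 <= tangent_gap k y.
Proof.
by move=> y_gt0; have := expR_ge_tangent k (ln y); rewrite lnK ?posrE // /tangent_gap; lra.
Qed.

Lemma tangent_gap_exchange k1 k2 y1 y2 : 0 < y1 -> 0 < y2 -> k2 <= k1 -> y1 <= y2 ->
  tangent_gap k2 y1 + tangent_gap k1 y2 <= tangent_gap k1 y1 + tangent_gap k2 y2.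
Proof.
move=> y1_gt0 y2_gt0 k21 y12.
have : 0 <= (expR k1 - expR k2) * (ln y2 - ln y1).
  by apply: mulr_ge0; rewrite subr_ge0 ?ler_expR ?ler_ln ?posrE.
by rewrite /tangent_gap; lra.
Qed.

Lemma tangent_gap_min k1 k2 y1 y2 : 0 < y1 -> 0 < y2 ->
  tangent_gap (Num.min k1 k2) (Num.min y1 y2) <= tangent_gap k1 y1 + tangent_gap k2 y2.
Proof.
wlog y12 : k1 k2 y1 y2 / y1 <= y2.
  move=> wlog_y12 y1_gt0 y2_gt0; have /orP[y12|y21] := le_total y1 y2.
    exact: wlog_y12.
  by rewrite minC [Num.min y1 _]minC addrC; apply: wlog_y12.
move=> y1_gt0 y2_gt0; rewrite (min_idPl y12).
have [k12|/ltW k21] := leP k1 k2; first by rewrite lerDl tangent_gap_ge0.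
have := tangent_gap_exchange y1_gt0 y2_gt0 k21 y12.
have := tangent_gap_ge0 k1 y2_gt0; lra.
Qed.

Lemma tangent_gap_max k1 k2 y1 y2 : 0 < y1 -> 0 < y2 ->
  tangent_gap (Num.max k1 k2) (Num.max y1 y2) <= tangent_gap k1 y1 + tangent_gap k2 y2.
Proof.
wlog y12 : k1 k2 y1 y2 / y1 <= y2.
  move=> wlog_y12 y1_gt0 y2_gt0; have /orP[y12|y21] := le_total y1 y2.
    exact: wlog_y12.
  by rewrite maxC [Num.max y1 _]maxC addrC; apply: wlog_y12.
move=> y1_gt0 y2_gt0; rewrite (max_idPr y12).
have [k12|/ltW k21] := leP k1 k2; first by rewrite lerDr tangent_gap_ge0.
have := tangent_gap_exchange y1_gt0 y2_gt0 k21 y12.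
have := tangent_gap_ge0 k2 y1_gt0; lra.
Qed.

Lemma tangent_gap_max_le_add k u v : 0 <= u -> 0 < v ->
  tangent_gap k (Num.max u v) <= u + tangent_gap k v.
Proof.
move=> u_ge0 v_gt0; have [uv|/ltW vu] := leP u v; first lra.
have : 0 <= expR k * (ln u - ln v).
  by rewrite mulr_ge0 ?expR_ge0 // subr_ge0 ler_ln ?posrE //; lra.
by rewrite /tangent_gap; lra.
Qed.

Lemma tangent_gap_double_sqr c y : c <= 0 -> 0 < y -> y <= 1 ->
  tangent_gap (2 * c) (y ^+ 2) <= 4 * tangent_gap c y.
Proof.
move=> c_le0 y_gt0 y_le1.
have ec_gt0 := expR_gt0 c; have ec_le1 : expR c <= 1 by rewrite expR_le1.
(* With y = e^c z, c factors out of both sides. *)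
pose z := y / expR c; have z_gt0 : 0 < z by rewrite divr_gt0.
have yE : y = expR c * z by rewrite /z mulrCA divff ?gt_eqF // mulr1.
have lnyE : ln y = c + ln z by rewrite yE lnM ?posrE // expRK.
have -> : tangent_gap (2 * c) (y ^+ 2) = expR c * (expR c * (z ^+ 2 - 1 - 2 * ln z)).
  by rewrite /tangent_gap expRM_natl lnXn // lnyE {1}yE; ring.
have -> : 4 * tangent_gap c y = expR c * (4 * (z - 1 - ln z)).
  by rewrite /tangent_gap lnyE {1}yE; ring.
rewrite ler_pM2l //; have ecz_le1 : expR c * z <= 1 by rewrite -yE.
rewrite -subr_ge0; have [z_le1|/ltW z_ge1] := leP z 1.
- rewrite -(pmulr_rge0 _ (_ : 0 < z + 1)); last lra.
  have -> : (z + 1) * (4 * (z - 1 - ln z) - expR c * (z ^+ 2 - 1 - 2 * ln z)) =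
      (4 - 2 * expR c) * (2 * (z - 1) - (z + 1) * ln z)
      + (z - 1) ^+ 2 * (4 - expR c * (z + 3)) by ring.
  have := addr1_mul_ln_le z_gt0 z_le1.
  by move=> ?; apply: addr_ge0; apply: mulr_ge0; rewrite ?sqr_ge0 //; nra.
- rewrite -(pmulr_rge0 _ (_ : 0 < 2 * z)); last lra.
  have -> : (2 * z) * (4 * (z - 1 - ln z) - expR c * (z ^+ 2 - 1 - 2 * ln z)) =
      (4 - 2 * expR c) * (z ^+ 2 - 1 - 2 * z * ln z)
      + 2 * (z - 1) ^+ 2 * (2 - expR c * (z + 1)) by ring.
  have := two_mul_ln_le_sqr_subr1 z_ge1.
  by move=> ?; apply: addr_ge0; apply: mulr_ge0; rewrite ?mulr_ge0 ?sqr_ge0 //; lra.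
Qed.

Lemma tangent_gap_sqr c y : 0 <= c -> 0 < y -> y <= 1 ->
  tangent_gap c (y ^+ 2) <= 4 * tangent_gap c y.
Proof.
move=> c_ge0 y_gt0 y_le1.
have ln_le : 2 * ln y <= 4 * y - y ^+ 2 - 3.
  rewrite -subr_ge0 -(pmulr_rge0 _ (_ : 0 < y + 1)); last lra.
  have -> : (y + 1) * (4 * y - y ^+ 2 - 3 - 2 * ln y) =
      (1 - y) ^+ 3 + 2 * (2 * (y - 1) - (y + 1) * ln y) by ring.
  have := addr1_mul_ln_le y_gt0 y_le1.
  by move=> ?; apply: addr_ge0; rewrite ?exprn_ge0; lra.
have := expR_ge_tangent c 0; rewrite expR0 => tangent0.
have : 0 <= (expR c - 1) * - ln y.
  apply: mulr_ge0; first by rewrite subr_ge0 -expR0 ler_expR.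
  by rewrite oppr_ge0 ln_le0.
by rewrite /tangent_gap lnXn //; lra.
Qed.

Lemma tangent_gap_double c y : c <= 0 -> 1 <= y ->
  tangent_gap (2 * c) y <= 4 * tangent_gap c y.
Proof.
move=> c_le0 y_ge1.
have ec_gt0 := expR_gt0 c; have ec_le1 : expR c <= 1 by rewrite expR_le1.
have ec2_le : expR c ^+ 2 - 1 <= 2 * expR c * c.
  have e_c_ge1 : 1 <= expR (- c) by rewrite -expR0 ler_expR oppr_ge0.
  have := two_mul_ln_le_sqr_subr1 e_c_ge1; rewrite expRK expRN => le.
  have := ler_wpM2l (ltW (mulr_gt0 ec_gt0 ec_gt0)) le.
  have : expR c * (expR c)^-1 = 1 by rewrite divff ?gt_eqF.
  nra.
(* The difference of the two sides is the sum of the four nonnegative terms below. *)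
have : 0 <= expR c * (4 - expR c) * (y - 1 - ln y).
  apply: mulr_ge0; first by apply: mulr_ge0; lra.
  by have := @ln_le_subr1 y; lra.
have : 0 <= (2 - expR c) * (2 * expR c * c - (expR c ^+ 2 - 1)).
  by rewrite mulr_ge0 ?subr_ge0 //; lra.
have : 0 <= (y - 1) * ((1 - expR c) * (3 - expR c)).
  by rewrite !mulr_ge0 ?subr_ge0 //; lra.
have : 0 <= (1 - expR c) ^+ 3 by rewrite exprn_ge0 ?subr_ge0.
by rewrite /tangent_gap expRM_natl; nra.
Qed.

Lemma tangent_gap_min_sqr c y : 0 < y ->
  tangent_gap (Num.min c (2 * c)) (Num.min y (y ^+ 2)) <= 4 * tangent_gap c y.
Proof.
move=> y_gt0; have [c_le0|c_gt0] := leP c 0.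
  rewrite (min_idPr (_ : 2 * c <= c)); last lra.
  have [y_le1|y_gt1] := leP y 1.
    have y2_le : y ^+ 2 <= y by rewrite expr2; nra.
    by rewrite (min_idPr y2_le) tangent_gap_double_sqr.
  have y_le2 : y <= y ^+ 2 by rewrite expr2; nra.
  by rewrite (min_idPl y_le2) tangent_gap_double // ltW.
rewrite (min_idPl (_ : c <= 2 * c)); last lra.
have [y_le1|y_gt1] := leP y 1.
  have y2_le : y ^+ 2 <= y by rewrite expr2; nra.
  by rewrite (min_idPr y2_le) tangent_gap_sqr // ltW.
have y_le2 : y <= y ^+ 2 by rewrite expr2; nra.
by rewrite (min_idPl y_le2); have := tangent_gap_ge0 c y_gt0; lra.
Qed.

End tangent_gap.

Section etangent_gap.
Local Open Scope ereal_scope.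
Variable R : realType.
Implicit Types (k x : \bar R) (c y : R).

Lemma gee0_neqNy x : 0 <= x -> x != -oo.
Proof. by case: x. Qed.

Lemma elog_le_subr1 y : elog y <= (y - 1)%:E.
Proof. by rewrite /elog; case: ifPn => [y_gt0|_]; rewrite ?lee_fin ?ln_le_subr1 ?leNye. Qed.

(* [ln y] is replaced by [elog y], so the gap is [+oo] for [y <= 0]; at [k = -oo] the tangent
   of exp is the zero line.  The value at [k = +oo] is junk and never used. *)
Definition etangent_gap k y : \bar R :=
  if k is c%:E then (if (0 < y)%R then (tangent_gap c y)%:E else +oo) else y%:E.

Lemma etangent_gapEFin c y : (0 < y)%R -> etangent_gap c%:E y = (tangent_gap c y)%:E.
Proof. by move=> /= ->. Qed.

Lemma etangent_gapEFin_le0 c y : (y <= 0)%R -> etangent_gap c%:E y = +oo.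
Proof. by rewrite /= ltNge => ->. Qed.

Lemma etangent_gap_ge0 k y : (0 <= y)%R -> 0 <= etangent_gap k y.
Proof.
move=> y_ge0; case: k => [c||] /=; rewrite ?lee_fin //.
by case: ifPn => // y_gt0; rewrite lee_fin tangent_gap_ge0.
Qed.

Lemma etangent_gap_min k1 k2 y1 y2 : (0 <= y1)%R -> (0 <= y2)%R ->
  k1 != +oo -> k2 != +oo ->
  etangent_gap (mine k1 k2) (Num.min y1 y2) <= etangent_gap k1 y1 + etangent_gap k2 y2.
Proof.
move=> y1_ge0 y2_ge0.
have g1 := etangent_gap_ge0 k1 y1_ge0; have g2 := etangent_gap_ge0 k2 y2_ge0.
case: k1 g1 => [c1||] // g1 _ k2_fin; last first.
  by rewrite minNye; apply: le_trans _ (leeDl _ g2); rewrite /= lee_fin ge_min lexx.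
case: k2 g2 k2_fin => [c2||] // g2 _; last first.
  by rewrite mineNy; apply: le_trans _ (leeDr _ g1); rewrite /= lee_fin ge_min lexx orbT.
have [y1_le0|y1_gt0] := leP y1 0%R.
  by rewrite (etangent_gapEFin_le0 c1 y1_le0) addye ?leey ?gee0_neqNy.
have [y2_le0|y2_gt0] := leP y2 0%R.
  by rewrite (etangent_gapEFin_le0 c2 y2_le0) addey ?leey ?gee0_neqNy.
rewrite -EFin_min !etangent_gapEFin ?lt_min ?y1_gt0 //.
by rewrite -EFinD lee_fin tangent_gap_min.
Qed.

Lemma etangent_gap_max_le_add k u v : (0 <= u)%R -> (0 <= v)%R -> k != +oo ->
  etangent_gap k (Num.max u v) <= u%:E + etangent_gap k v.
Proof.
move=> u_ge0 v_ge0; case: k => [c||] // _ /=; last first.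
  by rewrite -EFinD lee_fin ge_max; apply/andP; split; lra.
have [v_le0|v_gt0] := leP v 0%R; first by rewrite addey ?leey.
by rewrite lt_max v_gt0 orbT -EFinD lee_fin tangent_gap_max_le_add.
Qed.

Lemma etangent_gap_max k1 k2 y1 y2 : (0 <= y1)%R -> (0 <= y2)%R ->
  k1 != +oo -> k2 != +oo ->
  etangent_gap (maxe k1 k2) (Num.max y1 y2) <= etangent_gap k1 y1 + etangent_gap k2 y2.
Proof.
move=> y1_ge0 y2_ge0.
have g1 := etangent_gap_ge0 k1 y1_ge0; have g2 := etangent_gap_ge0 k2 y2_ge0.
case: k1 g1 => [c1||] // g1 _ k2_fin; last first.
  by rewrite maxNye; apply: etangent_gap_max_le_add.
case: k2 g2 k2_fin => [c2||] // g2 _; last first.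
  by rewrite maxeNy maxC addeC; apply: etangent_gap_max_le_add.
have [y1_le0|y1_gt0] := leP y1 0%R.
  by rewrite (etangent_gapEFin_le0 c1 y1_le0) addye ?leey ?gee0_neqNy.
have [y2_le0|y2_gt0] := leP y2 0%R.
  by rewrite (etangent_gapEFin_le0 c2 y2_le0) addey ?leey ?gee0_neqNy.
rewrite -EFin_max !etangent_gapEFin ?lt_max ?y1_gt0 //.
by rewrite -EFinD lee_fin tangent_gap_max.
Qed.

Lemma etangent_gap_min_sqr k y : (0 <= y)%R -> k != +oo ->
  etangent_gap (mine k (2%:E * k)) (Num.min y (y ^+ 2))%R <= 4%:E * etangent_gap k y.
Proof.
move=> y_ge0; case: k => [c||] // _; last first.
  rewrite mulrNy gtr0_sg // mul1e minxx /= -EFinM lee_fin ge_min; apply/orP; left; lra.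
rewrite -EFinM -EFin_min; have [y_le0|y_gt0] := leP y 0%R.
  by rewrite (etangent_gapEFin_le0 c y_le0) mulry gtr0_sg // mul1e leey.
rewrite !etangent_gapEFin ?lt_min ?y_gt0 ?exprn_gt0 //.
by rewrite -EFinM lee_fin tangent_gap_min_sqr.
Qed.

End etangent_gap.

Section measurable_etangent_gap.
Variable R : realType.

Lemma measurable_elog : measurable_fun setT (@elog R).
Proof.
apply: measurable_fun_ifT; first exact: measurable_fun_ltr.
  by apply: measurableT_comp => //; exact: measurable_ln.
exact: measurable_cst.
Qed.

Lemma measurable_tangent_gap (c : R) : measurable_fun setT (tangent_gap c).
Proof.
apply: measurable_funB; first exact: measurable_funB.
apply: measurable_funM => //; apply: measurable_funB => //; exact: measurable_ln.
Qed.

Lemma measurable_etangent_gap (k : \bar R) : measurable_fun setT (etangent_gap k).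
Proof.
case: k => [c||] /=; [|exact: EFin_measurable..].
apply: measurable_fun_ifT; first exact: measurable_fun_ltr.
  by apply: measurableT_comp => //; exact: measurable_tangent_gap.
exact: measurable_cst.
Qed.

End measurable_etangent_gap.

Section variational_formula.
Local Open Scope ereal_scope.
Context d (T : measurableType d) (R : realType) (sigma : probability T R).

Definition Edens (a : T -> R) : \bar R :=
  \int[sigma]_x (a x)%:E - expeR (\int[sigma]_x elog (a x)).

Lemma Efun_Edens (h : T -> R) : Efun sigma h = Edens (fun x => `|h x| ^+ 2)%R.
Proof. by []. Qed.

Lemma solve_affine_eq (E A P M : \bar R) (K r s : R) : (0 < K)%R ->
  0 <= E -> 0 <= M -> A \is a fin_num -> P \is a fin_num ->
  E + (K%:E * P + s%:E) = A + (K%:E * M + (r + s)%:E) ->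
  E = A + r%:E - K%:E * (P - M).
Proof.
move=> K_gt0 E_ge0 M_ge0 /fineK <- /fineK <-.
case: M M_ge0 => [m| |] // _; case: E E_ge0 => [e| |] // _.
- by move=> /eqP; rewrite -!EFinM -!EFinD eqe => /eqP eq; congr EFin; lra.
- by rewrite mulry gtr0_sg // mul1e addye // addey.
- by rewrite /= mulrNy gtr0_sg // mul1e addey.
Qed.

Lemma ge0_integralD_scale_cst (g f : T -> \bar R) (K b : R) :
  measurable_fun setT g -> measurable_fun setT f ->
  (forall x, 0 <= g x) -> (forall x, 0 <= f x) -> (0 <= K)%R -> (0 <= b)%R ->
  \int[sigma]_x (g x + (K%:E * f x + b%:E)) =
  \int[sigma]_x g x + (K%:E * \int[sigma]_x f x + b%:E).
Proof.
move=> mg mf g_ge0 f_ge0 K_ge0 b_ge0.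
have Kf_ge0 x : 0 <= K%:E * f x by rewrite mule_ge0 ?lee_fin.
have mKf : measurable_fun setT (fun x => K%:E * f x) by exact: measurable_funeM.
have sigmaT : (sigma : measure T R) [set: T] = 1 by exact: probability_setT.
rewrite ge0_integralD //; last 2 first.
- by move=> x _; rewrite adde_ge0 ?lee_fin.
- by apply: emeasurable_funD => //; exact: measurable_cst.
by rewrite ge0_integralD // ge0_integralZl ?lee_fin // integral_cst // sigmaT mule1.
Qed.

Variable a : T -> R.
Hypotheses (ma : measurable_fun setT a) (a_ge0 : forall x, (0 <= a x)%R)
  (a_int : \int[sigma]_x (a x)%:E < +oo).

Let U x := elog (a x).

Let mU : measurable_fun setT U.
Proof. exact: measurableT_comp (@measurable_elog R) ma. Qed.

Let a_fin : \int[sigma]_x (a x)%:E \is a fin_num.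
Proof. by rewrite ge0_fin_numE // integral_ge0 // => x _; rewrite lee_fin. Qed.

Let integral_elog_pos_fin : \int[sigma]_x U^\+ x \is a fin_num.
Proof.
rewrite ge0_fin_numE; last by apply: integral_ge0 => x _; exact: funepos_ge0.
apply: le_lt_trans a_int; apply: ge0_le_integral => //.
- exact: measurable_funepos mU.
- exact: measurableT_comp.
move=> x _; rewrite funeposE /U ge_max lee_fin a_ge0 andbT.
by apply: le_trans (elog_le_subr1 _) _; rewrite lee_fin lerBlDr lerDl.
Qed.

Lemma integral_elog_lt_pinfty : \int[sigma]_x elog (a x) < +oo.
Proof.
rewrite (integralE _ _ U) -(fineK integral_elog_pos_fin).
have : 0 <= \int[sigma]_x U^\- x by apply: integral_ge0 => x _; exact: funeneg_ge0.
by case: (\int[sigma]_x U^\- x) => [m| |] //= _; rewrite ?ltry // -EFinB ltry.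
Qed.

Lemma integral_etangent_gap c :
  \int[sigma]_x etangent_gap c%:E (a x) =
  \int[sigma]_x (a x)%:E + (expR c * (c - 1))%:E
    - (expR c)%:E * \int[sigma]_x elog (a x).
Proof.
have K_gt0 := expR_gt0 c; set K := expR c in K_gt0 *; set r := (K * (c - 1))%R.
(* Both sides are sums of nonnegative terms, so they can be integrated termwise although
   [elog (a x)] need not be integrable. *)
have pointwise x : etangent_gap c%:E (a x) + (K%:E * U^\+ x + `|r|%:E) =
    (a x)%:E + (K%:E * U^\- x + (r + `|r|)%:E).
  rewrite funeposE funenegE /U /elog /=; case: ifPn => [ax_gt0|_]; last first.
    by rewrite maxNye maxye mule0 add0e addye // mulry gtr0_sg // mul1e addye // addey.
  rewrite -EFinN -!EFin_max -!EFinM -!EFinD; congr EFin.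
  rewrite /tangent_gap /r /K; have [ln_ge0|ln_lt0] := leP 0%R (ln (a x)).
    by rewrite max_r ?oppr_le0 //; ring.
  by rewrite max_l ?oppr_ge0 ?ltW //; ring.
have K_ge0 := ltW K_gt0; have r_ge0 : (0 <= `|r|)%R := normr_ge0 r.
have rr_ge0 : (0 <= r + `|r|)%R by have := ler_norm (- r); rewrite normrN; lra.
have g_ge0 x : 0 <= etangent_gap c%:E (a x) by rewrite etangent_gap_ge0.
have : \int[sigma]_x (etangent_gap c%:E (a x) + (K%:E * U^\+ x + `|r|%:E)) =
    \int[sigma]_x ((a x)%:E + (K%:E * U^\- x + (r + `|r|)%:E)).
  by apply: eq_integral => x _; exact: pointwise.
have mg : measurable_fun setT (fun x => etangent_gap c%:E (a x)).
  exact: measurableT_comp (measurable_etangent_gap _) ma.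
have mEa : measurable_fun setT (fun x => (a x)%:E) by exact: measurableT_comp.
have mUp := measurable_funepos mU; have mUn := measurable_funeneg mU.
rewrite !ge0_integralD_scale_cst //.
move=> /solve_affine_eq eq; rewrite (integralE _ _ U) eq //.
  by apply: integral_ge0 => x _.
by apply: integral_ge0 => x _; exact: funeneg_ge0.
Qed.

Lemma Edens_le_integral_etangent_gap k : k != +oo ->
  Edens a <= \int[sigma]_x etangent_gap k (a x).
Proof.
rewrite /Edens; case: k => [c||] // _; rewrite ?integral_etangent_gap -(fineK a_fin);
  move: integral_elog_lt_pinfty; case: (\int[sigma]_x elog (a x)) => [l| |] //= _.
- by rewrite -!EFinD lee_fin; have := expR_ge_tangent c l; lra.
- by rewrite mulrNy gtr0_sg ?expR_gt0 // mul1e /= addey // leey.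
- by rewrite -EFinD lee_fin; have := expR_gt0 l; lra.
- by rewrite oppr0 adde0.
Qed.

Lemma Edens_eq_integral_etangent_gap :
  Edens a = \int[sigma]_x etangent_gap (\int[sigma]_x elog (a x)) (a x).
Proof.
rewrite /Edens; move: integral_elog_lt_pinfty (integral_etangent_gap).
case: (\int[sigma]_x elog (a x)) => [l| |] //= _ integralE; last by rewrite sube0.
by rewrite integralE -(fineK a_fin) -!EFinD; congr EFin; ring.
Qed.

End variational_formula.

Section Edens_inequalities.
Local Open Scope ereal_scope.
Context d (T : measurableType d) (R : realType) (sigma : probability T R).
Variables af ag : T -> R.
Hypotheses (maf : measurable_fun setT af) (mag : measurable_fun setT ag).
Hypotheses (af_ge0 : forall x, (0 <= af x)%R) (ag_ge0 : forall x, (0 <= ag x)%R).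
Hypotheses (af_int : \int[sigma]_x (af x)%:E < +oo) (ag_int : \int[sigma]_x (ag x)%:E < +oo).

Let Lf := \int[sigma]_x elog (af x).
Let Lg := \int[sigma]_x elog (ag x).
Let Lf_lt_pinfty : Lf < +oo := integral_elog_lt_pinfty maf af_ge0 af_int.
Let Lg_lt_pinfty : Lg < +oo := integral_elog_lt_pinfty mag ag_ge0 ag_int.

Let dominated_int_lt_pinfty (ah : T -> R) : measurable_fun setT ah ->
  (forall x, 0 <= ah x)%R -> (forall x, ah x <= af x + ag x)%R ->
  \int[sigma]_x (ah x)%:E < +oo.
Proof.
move=> mah ah_ge0 ah_le; apply: (@le_lt_trans _ _ (\int[sigma]_x ((af x)%:E + (ag x)%:E))).
  apply: ge0_le_integral => //; first by move=> x _; rewrite lee_fin.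
  - exact: measurableT_comp.
  - by apply: emeasurable_funD; exact: measurableT_comp.
  - by move=> x _; rewrite -EFinD lee_fin.
rewrite ge0_integralD //; last 4 first.
- by move=> x _; rewrite lee_fin.
- exact: measurableT_comp.
- by move=> x _; rewrite lee_fin.
- exact: measurableT_comp.
by rewrite lte_add_pinfty.
Qed.

Lemma Edens_le_add (ah : T -> R) k : measurable_fun setT ah ->
  (forall x, 0 <= ah x)%R -> (forall x, ah x <= af x + ag x)%R -> k != +oo ->
  (forall x, etangent_gap k (ah x) <= etangent_gap Lf (af x) + etangent_gap Lg (ag x)) ->
  Edens sigma ah <= Edens sigma af + Edens sigma ag.
Proof.
move=> mah ah_ge0 ah_le k_fin gap_le.
have ah_int := dominated_int_lt_pinfty mah ah_ge0 ah_le.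
apply: le_trans (Edens_le_integral_etangent_gap mah ah_ge0 ah_int k_fin) _.
rewrite (Edens_eq_integral_etangent_gap maf) // (Edens_eq_integral_etangent_gap mag) //.
rewrite -ge0_integralD //; last 4 first.
- by move=> x _; exact: etangent_gap_ge0.
- exact: measurableT_comp (measurable_etangent_gap _) maf.
- by move=> x _; exact: etangent_gap_ge0.
- exact: measurableT_comp (measurable_etangent_gap _) mag.
apply: ge0_le_integral => //.
- by move=> x _; exact: etangent_gap_ge0.
- exact: measurableT_comp (measurable_etangent_gap _) mah.
- by apply: emeasurable_funD; exact: measurableT_comp (measurable_etangent_gap _) _.
Qed.

Lemma Edens_le_scale (ah : T -> R) k (lambda : R) : (0 <= lambda)%R ->
  measurable_fun setT ah -> (forall x, 0 <= ah x)%R -> (forall x, ah x <= af x)%R ->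
  k != +oo -> (forall x, etangent_gap k (ah x) <= lambda%:E * etangent_gap Lf (af x)) ->
  Edens sigma ah <= lambda%:E * Edens sigma af.
Proof.
move=> lambda_ge0 mah ah_ge0 ah_le k_fin gap_le.
have ah_int : \int[sigma]_x (ah x)%:E < +oo.
  apply: le_lt_trans af_int; apply: ge0_le_integral => //.
  - by move=> x _; rewrite lee_fin.
  - exact: measurableT_comp.
  - exact: measurableT_comp.
  - by move=> x _; rewrite lee_fin.
apply: le_trans (Edens_le_integral_etangent_gap mah ah_ge0 ah_int k_fin) _.
rewrite (Edens_eq_integral_etangent_gap maf) // -ge0_integralZl //; last 2 first.
- exact: measurableT_comp (measurable_etangent_gap _) maf.
- by move=> x _; exact: etangent_gap_ge0.
apply: ge0_le_integral => //.
- by move=> x _; exact: etangent_gap_ge0.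
- exact: measurableT_comp (measurable_etangent_gap _) mah.
- by apply: measurable_funeM; exact: measurableT_comp (measurable_etangent_gap _) maf.
Qed.

Lemma Edens_min (ah : T -> R) : measurable_fun setT ah ->
  (forall x, ah x = Num.min (af x) (ag x)) -> Edens sigma ah <= Edens sigma af + Edens sigma ag.
Proof.
move=> mah ahE; apply: (@Edens_le_add _ (mine Lf Lg)) => // [x|x||x].
- by rewrite ahE le_min af_ge0 ag_ge0.
- by rewrite ahE ge_min lerDl ag_ge0.
- by rewrite -ltey gt_min Lf_lt_pinfty.
- by rewrite ahE etangent_gap_min // -ltey.
Qed.

Lemma Edens_max (ah : T -> R) : measurable_fun setT ah ->
  (forall x, ah x = Num.max (af x) (ag x)) -> Edens sigma ah <= Edens sigma af + Edens sigma ag.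
Proof.
move=> mah ahE; apply: (@Edens_le_add _ (maxe Lf Lg)) => // [x|x||x].
- by rewrite ahE le_max af_ge0.
- by rewrite ahE ge_max lerDl lerDr ag_ge0 af_ge0.
- by rewrite -ltey gt_max Lf_lt_pinfty.
- by rewrite ahE etangent_gap_max // -ltey.
Qed.

Lemma Edens_min_sqr (ah : T -> R) : measurable_fun setT ah ->
  (forall x, ah x = Num.min (af x) (af x ^+ 2))%R -> Edens sigma ah <= 4%:E * Edens sigma af.
Proof.
move=> mah ahE; apply: (@Edens_le_scale _ (mine Lf (2%:E * Lf))) => // [x|x||x].
- by rewrite ahE le_min af_ge0 sqr_ge0.
- by rewrite ahE ge_min lexx.
- by rewrite -ltey gt_min Lf_lt_pinfty.
- by rewrite ahE etangent_gap_min_sqr // -ltey.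
Qed.

End Edens_inequalities.

Lemma sqrr_min (R : realDomainType) (u v : R) : 0 <= u -> 0 <= v ->
  Num.min u v ^+ 2 = Num.min (u ^+ 2) (v ^+ 2).
Proof.
move=> u_ge0 v_ge0; have [uv|/ltW vu] := leP u v; apply/esym.
  by apply/min_idPl; rewrite ler_sqr.
by apply/min_idPr; rewrite ler_sqr.
Qed.

Lemma sqrr_max (R : realDomainType) (u v : R) : 0 <= u -> 0 <= v ->
  Num.max u v ^+ 2 = Num.max (u ^+ 2) (v ^+ 2).
Proof.
move=> u_ge0 v_ge0; have [uv|/ltW vu] := leP u v; apply/esym.
  by apply/max_idPr; rewrite ler_sqr.
by apply/max_idPl; rewrite ler_sqr.
Qed.

Lemma measurable_sqr_normr d (T : measurableType d) (R : realType) (h : T -> R) :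
  measurable_fun setT h -> measurable_fun setT (fun x => `|h x| ^+ 2).
Proof.
by move=> mh; apply: measurable_funX; exact: measurableT_comp (@normr_measurable R setT) mh.
Qed.

Local Open Scope ereal_scope.

Theorem mainTheorem8 (d : measure_display) (T : measurableType d) (R : realType)
  (sigma : probability T R) (f g : T -> R) :
  inL2 sigma f -> inL2 sigma g ->
  sigma [set x | (`|f x * g x| = 0)%R] = 0 ->
  (forall h : T -> R, measurable_fun setT h ->
     (forall x, (`|h x| = Num.min `|f x| `|g x|)%R) ->
     Efun sigma h <= Efun sigma f + Efun sigma g) /\
  (forall h : T -> R, measurable_fun setT h ->
     (forall x, (`|h x| = Num.max `|f x| `|g x|)%R) ->
     Efun sigma h <= Efun sigma f + Efun sigma g) /\
  (forall h : T -> R, measurable_fun setT h ->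
     (forall x, (`|h x| = Num.min `|f x| `|f x ^+ 2|)%R) ->
     Efun sigma h <= 4%:E * Efun sigma f).
Proof.
move=> [/measurable_sqr_normr msf f_int] [/measurable_sqr_normr msg g_int] _.
have sq_ge0 (u : T -> R) x : (0 <= `|u x| ^+ 2)%R by rewrite exprn_ge0.
split; [|split] => h /measurable_sqr_normr msh hE; rewrite !Efun_Edens.
- apply: (Edens_min msf msg (sq_ge0 f) (sq_ge0 g) f_int g_int msh) => x.
  by rewrite hE sqrr_min.
- apply: (Edens_max msf msg (sq_ge0 f) (sq_ge0 g) f_int g_int msh) => x.
  by rewrite hE sqrr_max.
- apply: (Edens_min_sqr msf (sq_ge0 f) f_int msh) => x.
  by rewrite hE normrX sqrr_min ?exprn_ge0.
Qed.
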